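(* Every maximal finitely non-Hausdorff subset of a topological space $X$ is closed in $X$.
   Context: A non-empty subset $A$ of a topological space $X$ is called finitely non-Hausdorff if for every non-empty finite subset $F\subseteq A$ and every family $\{U_x:x\in F\}$ where each $U_x$ is an open neighborhood of $x$, we have $\bigcap_{x\in F}U_x\neq\emptyset$. It is a maximal finitely non-Hausdorff subset if moreover every finitely non-Hausdorff subset $B$ of $X$ with $A\subseteq B$ satisfies $B=A$. *)

From HB Require Import structures.
From mathcomp Require Import all_boot all_order all_algebra.
From mathcomp Require Import all_classical all_reals all_analysis.
Set Implicit Arguments. Unset Strict Implicit. Unset Printing Implicit Defensive.
Local Open Scope classical_set_scope.

(* A family indexed by F is
   represented by a function U : X -> set X (values outside F irrelevant). *)
Definition finitely_non_hausdorff {X : topologicalType} (A : set X) : Prop :=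
  A !=set0 /\
  forall (F : set X), finite_set F -> F !=set0 -> F `<=` A ->
  forall (U : X -> set X), (forall x, F x -> open (U x) /\ U x x) ->
  \bigcap_(x in F) U x !=set0.

Definition maximal_finitely_non_hausdorff {X : topologicalType} (A : set X) : Prop :=
  finitely_non_hausdorff A /\
  forall B : set X, finitely_non_hausdorff B -> A `<=` B -> B = A.

From mathcomp Require Import all_boot all_order all_algebra.
From mathcomp Require Import all_classical all_reals all_analysis.
Local Open Scope classical_set_scope.

(* Given points x of the closure of A with open neighbourhoods U x, pick a
   point a x of A inside U x.  The points x sharing the same a x = b have the
   common neighbourhood (the intersection of their U x) of b, and the property
   of A applied to these finitely many points b of A yields a point lying in
   every U x.  So the closure of a finitely non-Hausdorff set is again
   finitely non-Hausdorff, and a maximal one must equal its closure. *)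

Lemma filter_bigcap_finite (T : Type) (I : choiceType) (F : set_system T)
    (D : set I) (f : I -> set T) :
  Filter F -> finite_set D -> (forall i, D i -> F (f i)) ->
  F (\bigcap_(i in D) f i).
Proof.
move=> FF Dfin Ff; rewrite -(fset_setK Dfin); apply: filter_bigI => i.
by rewrite in_fset_set // inE; exact: Ff.
Qed.

Section FinitelyNonHausdorff.
Context {X : topologicalType}.

Lemma finitely_non_hausdorff_nbhs {A : set X} :
  finitely_non_hausdorff A ->
  forall F : set X, finite_set F -> F !=set0 -> F `<=` A ->
  forall U : X -> set X, (forall x, F x -> nbhs x (U x)) ->
  \bigcap_(x in F) U x !=set0.
Proof.
move=> [_ HA] F Ffin F0 FA U FU.
have [z Uz] := HA F Ffin F0 FA (fun x => interior (U x))
  (fun x Fx => conj (@open_interior _ _) (FU x Fx)).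
by exists z => x Fx; apply: interior_subset; exact: Uz.
Qed.

Lemma closure_finitely_non_hausdorff {A : set X} :
  finitely_non_hausdorff A -> finitely_non_hausdorff (closure A).
Proof.
move=> fnhA; have [[a0 Aa0] _] := fnhA.
split; first by exists a0; exact: subset_closure.
move=> F Ffin [x0 Fx0] FA U HU.
have /choice[a Ha] : forall x, exists b, F x -> A b /\ U x b.
  move=> x; have [Fx|nFx] := pselect (F x); last by exists a0.
  have [oU Ux] := HU x Fx.
  have [b [Ab Ub]] := FA x Fx (U x) (open_nbhs_nbhs (conj oU Ux)).
  by exists b.
pose W b := \bigcap_(x in F `&` (a @^-1` [set b])) U x.
have [z Wz] : \bigcap_(b in a @` F) W b !=set0.
  apply: (finitely_non_hausdorff_nbhs fnhA _ _ _ _ W).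
  - exact: finite_image.
  - by exists (a x0), x0.
  - by move=> _ [x Fx <-]; exact: (Ha x Fx).1.
  move=> _ [x Fx <-]; apply: filter_bigcap_finite.
  - exact: sub_finite_set Ffin.
  move=> y [Fy /= <-]; apply: open_nbhs_nbhs; split; first exact: (HU y Fy).1.
  exact: (Ha y Fy).2.
by exists z => x Fx; apply: (Wz (a x)); [exists x | split].
Qed.

End FinitelyNonHausdorff.

Theorem corollary2p6 (X : topologicalType) (A : set X) :
  maximal_finitely_non_hausdorff A -> closed A.
Proof.
move=> [fnhA maxA]; rewrite /closed.
by rewrite (maxA _ (closure_finitely_non_hausdorff fnhA) (@subset_closure _ A)).
Qed.
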